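(* Let $Q$ be a power associative loop such that the factor loop $Q/Z(Q)$ is a cyclic group. Then $Q$ is an abelian group. *)

From Stdlib Require Import ZArith.
Open Scope Z_scope.

Section Loops.
Variable T : Type.
Variables (mul ldiv rdiv : T -> T -> T) (e : T).

(* A loop (T, *, \, /, e): a quasigroup with two-sided identity e.
   ldiv a b = a\b is the unique x with a*x = b; rdiv b a = b/a the unique y with y*a = b. *)
Definition is_loop : Prop :=
  (forall a b, mul a (ldiv a b) = b) /\
  (forall a b, ldiv a (mul a b) = b) /\
  (forall a b, mul (rdiv b a) a = b) /\
  (forall a b, rdiv (mul b a) a = b) /\
  (forall x, mul e x = x) /\
  (forall x, mul x e = x).

Inductive gen (x : T) : T -> Prop :=
  | gen_x : gen x x
  | gen_e : gen x e
  | gen_mul a b : gen x a -> gen x b -> gen x (mul a b)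
  | gen_ldiv a b : gen x a -> gen x b -> gen x (ldiv a b)
  | gen_rdiv a b : gen x a -> gen x b -> gen x (rdiv a b).

Definition power_associative : Prop :=
  forall x a b c, gen x a -> gen x b -> gen x c ->
    mul (mul a b) c = mul a (mul b c).

Definition in_center (z : T) : Prop :=
  (forall x, mul z x = mul x z) /\
  (forall x y, mul (mul z x) y = mul z (mul x y)) /\
  (forall x y, mul (mul x z) y = mul x (mul z y)) /\
  (forall x y, mul (mul x y) z = mul x (mul y z)).

Fixpoint npow (a : T) (n : nat) : T :=
  match n with O => e | S m => mul (npow a m) a end.
Definition linv (a : T) : T := ldiv a e.
Definition zpow (a : T) (k : Z) : T :=
  match k with
  | Z0 => e
  | Zpos p => npow a (Pos.to_nat p)
  | Zneg p => npow (linv a) (Pos.to_nat p)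
  end.

(* Q/Z(Q) is a cyclic group: there is a Z(Q)-coset aZ(Q) such that every coset
   xZ(Q) is one of its integer powers (aZ(Q))^k = a^k Z(Q), i.e. x = a^k * z with z central. *)
Definition center_quotient_cyclic : Prop :=
  exists a, forall x, exists (k : Z) z, in_center z /\ x = mul (zpow a k) z.

Definition abelian_group : Prop :=
  (forall x y z, mul (mul x y) z = mul x (mul y z)) /\
  (forall x y, mul x y = mul y x).
End Loops.

From Pilot Require Import Defs.
From Stdlib Require Import ZArith.

(* Write every element as a^k z with z central.  Central factors can be pulled
   out of any product, so associativity and commutativity of Q reduce to the
   same properties for integer powers of the single element a.  These lie in
   the subloop generated by a, which is a group by power associativity, and two
   elements of a group that commute have commuting powers. *)

Section CentralFactors.
Variables (T : Type) (mul : T -> T -> T).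

Lemma in_center_mul z w :
  in_center T mul z -> in_center T mul w -> in_center T mul (mul z w).
Proof.
  intros [z1 [z2 [z3 z4]]] [w1 [w2 [w3 w4]]]; repeat split; intros.
  - now rewrite z2, w1, <- z2, z1, z3.
  - now rewrite z2, z2, w2, <- z2.
  - now rewrite <- z3, w3, z3, z2.
  - now rewrite <- w4, z4, w4, w4.
Qed.

Lemma mulACA_center p q z w :
  in_center T mul z -> in_center T mul w ->
  mul (mul p z) (mul q w) = mul (mul p q) (mul z w).
Proof.
  intros [z1 [z2 [z3 z4]]] [w1 [w2 [w3 w4]]].
  rewrite (z3 p), <- (z2 q w), (z1 q), (z3 q w).
  now rewrite <- (w4 (mul p q) z), (z4 p q), (w4 p (mul q z)), (w4 q z).
Qed.

End CentralFactors.

Section CyclicSubloop.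
Variables (T : Type) (mul ldiv rdiv : T -> T -> T) (e a : T).
Hypothesis loopQ : is_loop T mul ldiv rdiv e.
Hypothesis gen_assoc : forall b c d,
  gen T mul ldiv rdiv e a b -> gen T mul ldiv rdiv e a c -> gen T mul ldiv rdiv e a d ->
  mul (mul b c) d = mul b (mul c d).

Local Notation gen_a := (gen T mul ldiv rdiv e a).
Local Notation npow := (npow T mul e).
Local Notation linv := (linv T ldiv e).

Lemma mul_e_l x : mul e x = x.
Proof. now destruct loopQ as (_ & _ & _ & _ & H & _). Qed.

Lemma mul_e_r x : mul x e = x.
Proof. now destruct loopQ as (_ & _ & _ & _ & _ & H). Qed.

Lemma gen_linv : gen_a (linv a).
Proof. unfold Defs.linv; apply gen_ldiv; constructor. Qed.

Lemma gen_npow b n : gen_a b -> gen_a (npow b n).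
Proof. intros Hb; induction n; simpl; constructor; auto. Qed.

Lemma mul_linv : mul a (linv a) = e.
Proof. destruct loopQ as (H & _); apply H. Qed.

Lemma linv_mul : mul (linv a) a = e.
Proof.
  destruct loopQ as (_ & ldivK & _).
  assert (Gl := gen_linv); assert (Ga : gen_a a) by constructor.
  assert (E : mul a (mul (linv a) a) = mul a e).
  { now rewrite <- gen_assoc, mul_linv, mul_e_l, mul_e_r. }
  now rewrite <- (ldivK a (mul (linv a) a)), E, ldivK.
Qed.

Lemma npow_commute_r b c n : gen_a b -> gen_a c ->
  mul b c = mul c b -> mul b (npow c n) = mul (npow c n) b.
Proof.
  intros Gb Gc Hbc; induction n as [|n IH]; simpl.
  - now rewrite mul_e_l, mul_e_r.
  - assert (Gn := gen_npow c n Gc).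
    rewrite <- gen_assoc, IH, gen_assoc, Hbc, <- gen_assoc by auto.
    reflexivity.
Qed.

Lemma npow_commute b c m n : gen_a b -> gen_a c ->
  mul b c = mul c b -> mul (npow b m) (npow c n) = mul (npow c n) (npow b m).
Proof.
  intros Gb Gc Hbc; symmetry.
  apply npow_commute_r; auto using gen_npow.
  symmetry; apply npow_commute_r; auto.
Qed.

Lemma zpow_commute i j :
  mul (zpow T mul ldiv e a i) (zpow T mul ldiv e a j)
  = mul (zpow T mul ldiv e a j) (zpow T mul ldiv e a i).
Proof.
  assert (Ga : gen_a a) by constructor; assert (Gl := gen_linv).
  assert (Hal : mul a (linv a) = mul (linv a) a) by now rewrite mul_linv, linv_mul.
  destruct i, j; simpl; rewrite ?mul_e_l, ?mul_e_r; try reflexivity;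
    apply npow_commute; auto.
Qed.

Lemma gen_zpow k : gen_a (zpow T mul ldiv e a k).
Proof. destruct k; [apply gen_e | apply gen_npow, gen_x | apply gen_npow, gen_linv]. Qed.

Hypothesis cosets : forall x, exists k z,
  in_center T mul z /\ x = mul (zpow T mul ldiv e a k) z.

Lemma mulA_of_cyclic_center_quotient x y u :
  mul (mul x y) u = mul x (mul y u).
Proof.
  destruct (cosets x) as [i [z [Cz ->]]], (cosets y) as [j [w [Cw ->]]],
    (cosets u) as [k [v [Cv ->]]].
  rewrite (mulACA_center _ _ _ _ z w), (mulACA_center _ _ _ _ (mul z w) v),
    (mulACA_center _ _ _ _ w v), (mulACA_center _ _ _ _ z (mul w v))
    by auto using in_center_mul.
  rewrite (gen_assoc (zpow T mul ldiv e a i)) by apply gen_zpow.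
  destruct Cz as (_ & z2 & _); now rewrite z2.
Qed.

Lemma mulC_of_cyclic_center_quotient x y : mul x y = mul y x.
Proof.
  destruct (cosets x) as [i [z [Cz ->]]], (cosets y) as [j [w [Cw ->]]].
  rewrite (mulACA_center _ _ _ _ z w), (mulACA_center _ _ _ _ w z), zpow_commute
    by auto.
  destruct Cz as (z1 & _); now rewrite (z1 w).
Qed.

End CyclicSubloop.

Theorem proposition4p1 (T : Type) (mul ldiv rdiv : T -> T -> T) (e : T) :
  is_loop T mul ldiv rdiv e ->
  power_associative T mul ldiv rdiv e ->
  center_quotient_cyclic T mul ldiv e ->
  abelian_group T mul.
Proof.
  intros loopQ PA [a cosets]; split.
  - exact (mulA_of_cyclic_center_quotient T mul ldiv rdiv e a (PA a) cosets).
  - exact (mulC_of_cyclic_center_quotient T mul ldiv rdiv e a loopQ (PA a) cosets).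
Qed.
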